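(* Assume (A1) and (A2) below. Then for any policy $\pi$ and any $s\in\mathcal S$, the posterior variance of the value function $U_t^\pi(s)=\mathbb{V}_{p\sim\Phi_t}\big[V^{\pi,p}(s)\big]$ satisfies the uncertainty Bellman equation $$U_t^\pi(s)=\gamma^2u_t(s)+\gamma^2\sum_{a,s'}\pi(a\mid s)\,\bar p_t(s'\mid s,a)\,U_t^\pi(s'),$$ where the local uncertainty is $$u_t(s)=\mathbb{V}_{a,s'\sim\pi,\bar p_t}\big[\bar V_t^\pi(s')\big]-\mathbb{E}_{p\sim\Phi_t}\Big[\mathbb{V}_{a,s'\sim\pi,p}\big[V^{\pi,p}(s')\big]\Big].$$
   Context: Let $\mathcal S$ be a finite state space, $\mathcal A$ a finite action space, $r:\mathcal S\times\mathcal A\to\mathbb R$ a known bounded (deterministic) reward function and $\gamma\in[0,1)$ a discount factor. A transition function $p$ assigns to each $(s,a)$ a probability distribution $p(\cdot\mid s,a)$ on $\mathcal S$. A policy $\pi$ gives distributions $\pi(\cdot\mid s)$ on $\mathcal A$. For a transition function $p$, the value function is $V^{\pi,p}(s)=\mathbb E\big[\sum_{h\ge 0}\gamma^h r(s_h,a_h)\mid s_0=s\big]$ with $a_h\sim\pi(\cdot\mid s_h)$, $s_{h+1}\sim p(\cdot\mid s_h,a_h)$. The transition function $p$ is a random variable with (posterior) distribution $\Phi_t$. Define $\bar p_t(s'\mid s,a)=\mathbb E_{p\sim\Phi_t}[p(s'\mid s,a)]$ and $\bar V^\pi_t(s)=\mathbb E_{p\sim\Phi_t}[V^{\pi,p}(s)]$.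 For a transition function $q$ and a function $f$ on $\mathcal S$, $\mathbb V_{a,s'\sim\pi,q}[f(s')]$ denotes the variance of $f(s')$ when $a\sim\pi(\cdot\mid s)$ and $s'\sim q(\cdot\mid s,a)$. Assumptions: (A1) (independent transitions) $p(s'\mid x,a)$ and $p(s'\mid y,a)$ are independent random variables if $x\neq y$; (A2) (acyclic MDP) the MDP is a directed acyclic graph, i.e., states are not visited more than once in any given episode. *)

From HB Require Import structures.
From mathcomp Require Import all_boot all_order all_algebra.
From mathcomp Require Import all_classical all_reals all_analysis.
Set Implicit Arguments. Unset Strict Implicit. Unset Printing Implicit Defensive.
Import Order.TTheory GRing.Theory Num.Theory.
Local Open Scope classical_set_scope.
Local Open Scope ring_scope.

Section MDP.
Variables (R : realType) (S A : finType).

(* a transition function: q s a s' = q(s' | s, a) *)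
Definition trans := S -> A -> S -> R.
Definition policy := S -> A -> R.

Definition is_policy (pi : policy) :=
  (forall s a, 0 <= pi s a) /\ (forall s, \sum_(a : A) pi s a = 1).

Definition is_trans (q : trans) :=
  (forall s a s', 0 <= q s a s') /\ (forall s a, \sum_(s' : S) q s a s' = 1).

Definition step (pi : policy) (q : trans) (f : S -> R) : S -> R :=
  fun s => \sum_(a : A) pi s a * \sum_(s' : S) q s a s' * f s'.

Definition rpi (r : S -> A -> R) (pi : policy) : S -> R :=
  fun s => \sum_(a : A) pi s a * r s a.

(* V^{pi,q}(s) = E[ sum_h gamma^h r(s_h,a_h) | s_0 = s ]
              = sum_{h>=0} gamma^h E[r(s_h,a_h)], with E[r(s_h,a_h)] = (step^h rpi)(s) *)
Definition value (r : S -> A -> R) (gamma : R) (pi : policy) (q : trans) : S -> R :=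
  fun s => limn (fun n => \sum_(0 <= h < n) gamma ^+ h * iter h (step pi q) (rpi r pi) s).

Definition locvar (pi : policy) (q : trans) (f : S -> R) (s : S) : R :=
  step pi q (fun x => f x ^+ 2) s - (step pi q f s) ^+ 2.

End MDP.

Section Posterior.
Variables (R : realType) (d : measure_display) (Om : measurableType d)
  (Pr : probability Om R).

Definition Ex (X : Om -> R) : R := Rintegral Pr setT X.
Definition Var (X : Om -> R) : R := Ex (fun w => (X w - Ex X) ^+ 2).

Variables (S A : finType).

(* (A1): the rows p(.|x,.) , x in S, are mutually independent random
   variables: product rule on the generating pi-system of cylinder events
   (taking B = setT for some x gives every subfamily). *)
Definition indep_rows (P : Om -> trans R S A) :=
  forall B : S -> A -> S -> set R, (forall x a s', measurable (B x a s')) ->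
    let E x := [set w | forall a s', B x a s' (P w x a s')] in
    Pr (\bigcap_(x in [set: S]) E x) = (\prod_(x : S) fine (Pr (E x)))%:E.

(* There is a rank function strictly decreasing along every
   transition of positive probability, except at terminal states, which are
   absorbing with zero reward (for every sample of the posterior). *)
Definition acyclic (r : S -> A -> R) (P : Om -> trans R S A) :=
  exists (rho : S -> nat) (T : pred S),
    (forall s, T s -> forall w a, P w s a s = 1 /\ r s a = 0) /\
    (forall w s a s', ~~ T s -> 0 < P w s a s' -> (rho s' < rho s)%N).

End Posterior.

From Pilot Require Import Defs.
From HB Require Import structures.
From mathcomp Require Import all_boot all_order all_algebra.
From mathcomp Require Import all_classical all_reals all_analysis.
From mathcomp Require Import measurable_realfun ring lra.
Set Implicit Arguments. Unset Strict Implicit. Unset Printing Implicit Defensive.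
Import Order.TTheory GRing.Theory Num.Theory.
Local Open Scope classical_set_scope.
Local Open Scope ring_scope.

(* By acyclicity, V(s) = r_pi(s) + gamma W with W = sum_{a,s'} pi(a|s) p(s'|s,a) V(s'), so
   U(s) = gamma^2 (E[W^2] - E[W]^2).  Both terms reduce to the identities
   E[p(s'|s,a) V(s')^k] = pbar(s'|s,a) E[V(s')^k] for k = 1, 2: the successors s' of s have
   smaller rank, hence V(s') only depends on the rows p(.|x,.) with x <> s, which are
   independent of the row of s.  Independence (A1) is only postulated on cylinder events; it
   is transferred to these expectations by rounding every transition probability down to
   the grid of mesh 1/N.  The grid cells of disjoint sets of rows are independent discrete
   random variables, p(s'|s,a) is within 1/N of a function of the cells of row s, and V(s'),
   a Lipschitz function of the other rows, is within O(1/N) of a function of their cells. *)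

Section BoundedExpectation.
Variables (R : realType) (d : measure_display) (Om : measurableType d)
  (Pr : probability Om R).

Definition bounded_measurable (f : Om -> R) :=
  measurable_fun setT f /\ exists M, forall w, `|f w| <= M.

Local Notation bmeas := bounded_measurable.
Local Notation Ex := (Ex Pr).

Lemma bounded_measurable_integrable f : bmeas f -> Pr.-integrable setT (EFin \o f).
Proof.
move=> [mf [M hM]]; apply: measurable_bounded_integrable => //.
  by apply: le_lt_trans (probability_le1 Pr measurableT) _; rewrite ltry.
exists M; split; first exact: num_real.
by move=> y hy w _ /=; apply: le_trans (hM w) (ltW hy).
Qed.

Lemma bounded_measurable_cst c : bmeas (fun=> c).
Proof. by split; [exact: measurable_cst | exists `|c|]. Qed.
Local Hint Resolve bounded_measurable_cst : core.

Lemma bounded_measurableD f g : bmeas f -> bmeas g -> bmeas (fun w => f w + g w).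
Proof.
move=> [mf [M hM]] [mg [N hN]]; split; first exact: measurable_funD.
by exists (M + N) => w; apply: le_trans (ler_normD _ _) (lerD _ _).
Qed.

Lemma bounded_measurableM f g : bmeas f -> bmeas g -> bmeas (fun w => f w * g w).
Proof.
move=> [mf [M hM]] [mg [N hN]]; split; first exact: measurable_funM.
by exists (M * N) => w; rewrite normrM ler_pM.
Qed.

Lemma bounded_measurableN f : bmeas f -> bmeas (fun w => - f w).
Proof.
move=> [mf [M hM]]; split; first exact: measurableT_comp.
by exists M => w; rewrite normrN.
Qed.

Lemma bounded_measurableB f g : bmeas f -> bmeas g -> bmeas (fun w => f w - g w).
Proof. by move=> bf bg; apply: bounded_measurableD => //; apply: bounded_measurableN. Qed.

Lemma bounded_measurable_sum (I : Type) (s : seq I) (F : I -> Om -> R) :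
  (forall i, bmeas (F i)) -> bmeas (fun w => \sum_(i <- s) F i w).
Proof.
move=> bF; elim: s => [|i s IH].
  by under eq_fun do rewrite big_nil; exact: bounded_measurable_cst.
by under eq_fun do rewrite big_cons; exact: bounded_measurableD.
Qed.

Lemma bounded_measurable_indic (D : set Om) : measurable D -> bmeas (\1_D : Om -> R).
Proof.
move=> mD; split; first exact: measurable_indic.
by exists 1 => w; rewrite indicE; case: (w \in D); rewrite ?normr1 ?normr0.
Qed.

Lemma eq_Ex f g : f =1 g -> Ex f = Ex g.
Proof. by move=> fg; apply: eq_Rintegral => w _; exact: fg. Qed.

Lemma ExD f g : bmeas f -> bmeas g -> Ex (fun w => f w + g w) = Ex f + Ex g.
Proof. by move=> bf bg; apply: RintegralD => //; exact: bounded_measurable_integrable. Qed.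

Lemma ExB f g : bmeas f -> bmeas g -> Ex (fun w => f w - g w) = Ex f - Ex g.
Proof. by move=> bf bg; apply: RintegralB => //; exact: bounded_measurable_integrable. Qed.

Lemma ExZl c f : bmeas f -> Ex (fun w => c * f w) = c * Ex f.
Proof. by move=> bf; apply: RintegralZl => //; exact: bounded_measurable_integrable. Qed.

Lemma Ex_cst c : Ex (fun=> c) = c.
Proof.
have -> : Ex (fun=> c) = c * fine (Pr setT) by rewrite /Defs.Ex Rintegral_cst.
by rewrite probability_setT mulr1.
Qed.

Lemma Ex_sum (I : Type) (s : seq I) (F : I -> Om -> R) :
  (forall i, bmeas (F i)) -> Ex (fun w => \sum_(i <- s) F i w) = \sum_(i <- s) Ex (F i).
Proof.
move=> bF; elim: s => [|i s IH].
  by under eq_fun do rewrite big_nil; rewrite big_nil Ex_cst.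
under eq_fun do rewrite big_cons.
by rewrite big_cons ExD ?IH //; exact: bounded_measurable_sum.
Qed.

Lemma Ex_mul_cst X Y c : (forall w, X w = c) -> bmeas Y ->
  Ex (fun w => X w * Y w) = Ex X * Ex Y.
Proof. by move=> Xc bY; rewrite (eq_Ex Xc) Ex_cst -ExZl //; apply: eq_Ex => w; rewrite Xc. Qed.

Lemma Ex_indic (D : set Om) : measurable D -> Ex (\1_D) = fine (Pr D).
Proof. by move=> mD; rewrite /Defs.Ex /Rintegral integral_indic // setIT. Qed.

Lemma norm_Ex_le f M : bmeas f -> (forall w, `|f w| <= M) -> `|Ex f| <= M.
Proof.
move=> bf hM; apply: le_trans (le_normr_Rintegral _ _) _ => //.
  exact: bounded_measurable_integrable.
rewrite -[M]Ex_cst; apply: le_Rintegral => //.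
  apply: bounded_measurable_integrable; case: bf => mf [N hN].
  by split; [exact: measurableT_comp | exists N => w; rewrite normr_id].
exact/bounded_measurable_integrable/bounded_measurable_cst.
Qed.

Lemma VarE f : bmeas f -> Var Pr f = Ex (fun w => f w ^+ 2) - Ex f ^+ 2.
Proof.
move=> bf; have bf2 : bmeas (fun w => f w ^+ 2) by exact: bounded_measurableM.
have bcf : bmeas (fun w => 2 * Ex f * f w) by exact: bounded_measurableM.
rewrite /Var (@eq_Ex _ (fun w => f w ^+ 2 - (2 * Ex f * f w - Ex f ^+ 2))); last first.
  by move=> w; rewrite sqrrB; ring.
by rewrite !ExB ?ExZl ?Ex_cst //; [ring | exact: bounded_measurableB].
Qed.

Lemma Var_affine c k f : bmeas f -> Var Pr (fun w => c + k * f w) = k ^+ 2 * Var Pr f.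
Proof.
move=> bf; have bkf : bmeas (fun w => k * f w) by exact: bounded_measurableM.
rewrite /Var ExD // ExZl // Ex_cst -[RHS]ExZl; last first.
  by apply: bounded_measurableM; exact: bounded_measurableB.
by apply: eq_Ex => w; ring.
Qed.

End BoundedExpectation.

#[local] Hint Resolve bounded_measurable_cst : core.

Section UncorrelatedApprox.
Variables (R : realType) (d : measure_display) (Om : measurableType d)
  (Pr : probability Om R).

Local Notation bmeas := (@bounded_measurable R d Om).
Local Notation Ex := (Ex Pr).

Lemma sum_indic_preimage (I : finType) (X : Om -> I) (f : I -> R) w :
  f (X w) = \sum_i f i * \1_(X @^-1` [set i]) w.
Proof.
rewrite (bigD1 (X w)) //= indicE mem_set // mulr1 big1 ?addr0 // => i Xwi.
by rewrite indicE memNset ?mulr0 //= => Xw; rewrite Xw eqxx in Xwi.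
Qed.

Section Discrete.
Variables (I : finType) (X : Om -> I).
Hypothesis mX : forall i, measurable (X @^-1` [set i]).

Lemma bounded_measurable_comp_discrete (f : I -> R) : bmeas (f \o X).
Proof.
rewrite (_ : f \o X = fun w => \sum_i f i * \1_(X @^-1` [set i]) w).
  apply: bounded_measurable_sum => i.
  by apply: bounded_measurableM => //; exact: bounded_measurable_indic.
by apply/funext => w; exact: sum_indic_preimage.
Qed.

Lemma Ex_comp_discrete (f : I -> R) :
  Ex (f \o X) = \sum_i f i * fine (Pr (X @^-1` [set i])).
Proof.
rewrite (eq_Ex Pr (sum_indic_preimage X f)).
rewrite Ex_sum => [|i]; last first.
  by apply: bounded_measurableM => //; exact: bounded_measurable_indic.
by apply: eq_bigr => i _; rewrite ExZl ?Ex_indic //; exact: bounded_measurable_indic.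
Qed.

End Discrete.

Lemma Ex_mul_indep_discrete (I J : finType) (X : Om -> I) (Y : Om -> J)
    (f : I -> R) (g : J -> R) :
  (forall i, measurable (X @^-1` [set i])) -> (forall j, measurable (Y @^-1` [set j])) ->
  (forall i j, fine (Pr (X @^-1` [set i] `&` Y @^-1` [set j])) =
     fine (Pr (X @^-1` [set i])) * fine (Pr (Y @^-1` [set j]))) ->
  Ex (fun w => f (X w) * g (Y w)) = Ex (f \o X) * Ex (g \o Y).
Proof.
move=> mX mY XY_indep; pose Z w := (X w, Y w).
have Z_preimage ij : Z @^-1` [set ij] = X @^-1` [set ij.1] `&` Y @^-1` [set ij.2].
  by case: ij => i j; apply/seteqP; split=> w; rewrite /Z /= => -[-> ->].
have mZ ij : measurable (Z @^-1` [set ij]) by rewrite Z_preimage; exact: measurableI.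
rewrite (Ex_comp_discrete mZ (fun ij => f ij.1 * g ij.2)) !Ex_comp_discrete //.
rewrite mulr_suml; under [RHS]eq_bigr => i _ do rewrite mulr_sumr.
rewrite pair_big; apply: eq_bigr => -[i j] _ /=.
by rewrite Z_preimage XY_indep /=; ring.
Qed.

Lemma eq0_of_le_div_nat (x c : R) : (forall n, (0 < n)%N -> `|x| <= c / n%:R) -> x = 0.
Proof.
move=> hx; apply/normr0_eq0/eqP; rewrite eq_le normr_ge0 andbT.
apply/ler_addgt0Pr => e e0; rewrite add0r; pose n := (Num.truncn (c / e)).+1.
apply: le_trans (hx n isT) _; rewrite ler_pdivrMr ?ltr0n // mulrC -ler_pdivrMr //.
exact/ltW/truncnS_gt.
Qed.

Lemma norm_mul_approx (x y x' y' e MX MY : R) :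
  `|x - x'| <= e -> `|y - y'| <= e -> `|x| <= MX -> `|y| <= MY ->
  `|x * y - x' * y'| <= (MX + MY + e) * e.
Proof.
move=> hx hy hMX hMY.
have hx' : `|x'| <= MX + e.
  rewrite (_ : x' = x - (x - x')); last by ring.
  by apply: le_trans (ler_normB _ _) (lerD _ _).
rewrite (_ : x * y - x' * y' = (x - x') * y + x' * (y - y')); last by ring.
apply: le_trans (ler_normD _ _) _; rewrite !normrM.
apply: le_trans (lerD (ler_pM _ _ hx hMY) (ler_pM _ _ hx' hy)) _ => //.
by lra.
Qed.

Lemma Ex_mul_of_uncorrelated_approx X Y C : bmeas X -> bmeas Y -> 0 <= C ->
  (forall N, (0 < N)%N -> exists Xn Yn, [/\ bmeas Xn, bmeas Yn,
     Ex (fun w => Xn w * Yn w) = Ex Xn * Ex Yn,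
     forall w, `|X w - Xn w| <= C / N%:R & forall w, `|Y w - Yn w| <= C / N%:R]) ->
  Ex (fun w => X w * Y w) = Ex X * Ex Y.
Proof.
move=> bX bY C0 approx.
have [_ [MX0 hMX0]] := bX; pose MX := `|MX0|.
have hMX w : `|X w| <= MX by exact: le_trans (hMX0 w) (ler_norm _).
have [_ [MY0 hMY0]] := bY; pose MY := `|MY0|.
have hMY w : `|Y w| <= MY by exact: le_trans (hMY0 w) (ler_norm _).
apply/eqP; rewrite -subr_eq0; apply/eqP.
apply: (@eq0_of_le_div_nat _ (2 * (MX + MY + C) * C)) => N N0.
have [Xn [Yn [bXn bYn uncorr hXn hYn]]] := approx N N0.
have bXY := bounded_measurableM bX bY; have bXYn := bounded_measurableM bXn bYn.
pose e := C / N%:R; have e0 : 0 <= e by rewrite divr_ge0.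
have eC : e <= C by rewrite ler_pdivrMr ?ltr0n // ler_peMr // ler1n.
have close_mul :
    `|Ex (fun w => X w * Y w) - Ex (fun w => Xn w * Yn w)| <= (MX + MY + e) * e.
  rewrite -ExB //; apply: norm_Ex_le => [|w]; first exact: bounded_measurableB.
  exact: norm_mul_approx.
have close_Ex : `|Ex X * Ex Y - Ex Xn * Ex Yn| <= (MX + MY + e) * e.
  apply: norm_mul_approx; try exact: norm_Ex_le;
  by rewrite -ExB //; apply: norm_Ex_le => //; exact: bounded_measurableB.
rewrite (_ : _ - _ = (Ex (fun w => X w * Y w) - Ex (fun w => Xn w * Yn w))
                     - (Ex X * Ex Y - Ex Xn * Ex Yn)); last by rewrite uncorr; ring.
apply: le_trans (ler_normB _ _) _; apply: le_trans (lerD close_mul close_Ex) _.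
have MX_ge0 : 0 <= MX by exact: normr_ge0.
have MY_ge0 : 0 <= MY by exact: normr_ge0.
by rewrite -!mulrA -/e; nra.
Qed.

End UncorrelatedApprox.

Section PolicyStep.
Variables (R : realType) (S A : finType) (pi : policy R S A).
Hypothesis pi_policy : is_policy pi.

Definition substochastic (q : trans R S A) :=
  (forall s a s', 0 <= q s a s') /\ (forall s a, \sum_s' q s a s' <= 1).

Lemma is_trans_substochastic q : is_trans q -> substochastic q.
Proof. by case=> q_ge0 q_sum1; split=> // s a; rewrite q_sum1. Qed.

Lemma substochastic_le q q' : substochastic q ->
  (forall s a s', 0 <= q' s a s' <= q s a s') -> substochastic q'.
Proof.
case=> _ q_sum_le1 q'q; split=> [s a s'|s a]; first by case/andP: (q'q s a s').
apply: le_trans (q_sum_le1 s a); apply: ler_sum => s' _; by case/andP: (q'q s a s').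
Qed.

Lemma norm_step_le q f M s : substochastic q -> (forall x, `|f x| <= M) ->
  `|step pi q f s| <= M.
Proof.
case: pi_policy => pi_ge0 pi_sum1 [q_ge0 q_sum_le1] hM.
have M_ge0 : 0 <= M by exact: le_trans (hM s).
apply: le_trans (ler_norm_sum _ _ _) _.
rewrite -[M]mul1r -(pi_sum1 s) mulr_suml; apply: ler_sum => a _.
rewrite normrM ger0_norm //; apply: ler_wpM2l => //.
apply: le_trans (ler_norm_sum _ _ _) _.
apply: le_trans (ler_piMl M_ge0 (q_sum_le1 s a)); rewrite mulr_suml.
by apply: ler_sum => s' _; rewrite normrM ger0_norm // ler_wpM2l.
Qed.

Lemma norm_iter_step_le q f M h s : substochastic q -> (forall x, `|f x| <= M) ->
  `|iter h (step pi q) f s| <= M.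
Proof. by move=> hq hM; elim: h s => [|h IH] s //=; exact: norm_step_le. Qed.

Lemma step_sum q (I : Type) (rr : seq I) (c : I -> R) (F : I -> S -> R) s :
  step pi q (fun x => \sum_(i <- rr) c i * F i x) s
  = \sum_(i <- rr) c i * step pi q (F i) s.
Proof.
rewrite /step; under eq_bigr => a _ do under eq_bigr => s' _ do rewrite mulr_sumr.
under eq_bigr => a _ do rewrite exchange_big mulr_sumr /=.
rewrite exchange_big /=; apply: eq_bigr => i _.
rewrite mulr_sumr; apply: eq_bigr => a _.
by rewrite !mulr_sumr; apply: eq_bigr => s' _; ring.
Qed.

Lemma stepB q f g s : step pi q (fun x => f x - g x) s = step pi q f s - step pi q g s.
Proof.
rewrite /step -sumrB; apply: eq_bigr => a _.
by rewrite -mulrBr -sumrB; congr (_ * _); apply: eq_bigr => s' _; rewrite mulrBr.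
Qed.

Lemma norm_iter_stepB_le q q' f M dl h x : substochastic q -> substochastic q' ->
  (forall s a s', `|q s a s' - q' s a s'| <= dl) -> (forall y, `|f y| <= M) ->
  `|iter h (step pi q) f x - iter h (step pi q') f x| <= h%:R * (#|S|%:R * dl * M).
Proof.
case: (pi_policy) => pi_ge0 pi_sum1 hq hq' hdl hM.
have M_ge0 : 0 <= M by exact: le_trans (hM x).
elim: h x => [|h IH] x /=; first by rewrite subrr normr0 mul0r.
set g := iter h (step pi q) f; set g' := iter h (step pi q') f.
have -> : step pi q g x - step pi q' g' x =
    step pi q (fun y => g y - g' y) x
    + \sum_a pi x a * \sum_s' (q x a s' - q' x a s') * g' s'.
  rewrite /step -sumrB -big_split /=; apply: eq_bigr => a _.
  rewrite -mulrBr -mulrDr -sumrB -big_split /=; congr (_ * _).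
  by apply: eq_bigr => s' _; ring.
apply: le_trans (ler_normD _ _) _; rewrite mulrSr mulrDl mul1r.
apply: lerD; first by apply: norm_step_le => // y; exact: IH.
apply: le_trans (ler_norm_sum _ _ _) _.
apply: le_trans (_ : _ <= \sum_a pi x a * (#|S|%:R * dl * M)) _; last first.
  by rewrite -mulr_suml pi_sum1 mul1r.
apply: ler_sum => a _; rewrite normrM ger0_norm //; apply: ler_wpM2l => //.
apply: le_trans (ler_norm_sum _ _ _) _.
rewrite -mulrA mulr_natl -sumr_const; apply: ler_sum => s' _.
by rewrite normrM ler_pM // norm_iter_step_le.
Qed.

End PolicyStep.

Definition horizon_value (R : realType) (S A : finType) (r : S -> A -> R) (gamma : R)
    (pi : policy R S A) (K : nat) (q : trans R S A) : S -> R :=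
  fun s => \sum_(0 <= h < K) gamma ^+ h * iter h (step pi q) (rpi r pi) s.

Section HorizonValue.
Variables (R : realType) (S A : finType) (r : S -> A -> R) (gamma : R)
  (pi : policy R S A) (K : nat) (Mr : R).
Hypotheses (pi_policy : is_policy pi) (rpi_le : forall x, `|rpi r pi x| <= Mr).

Local Notation hv := (horizon_value r gamma pi K).

Lemma norm_horizon_value_le q s : substochastic q ->
  `|hv q s| <= \sum_(0 <= h < K) `|gamma| ^+ h * Mr.
Proof.
move=> hq; apply: le_trans (ler_norm_sum _ _ _) (ler_sum _ _) => h _.
by rewrite normrM normrX ler_wpM2l ?exprn_ge0 // norm_iter_step_le.
Qed.

Lemma norm_horizon_valueB_le q q' dl s : substochastic q -> substochastic q' ->
  (forall x a y, `|q x a y - q' x a y| <= dl) ->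
  `|hv q s - hv q' s| <=
    (\sum_(0 <= h < K) `|gamma| ^+ h * (h%:R * (#|S|%:R * Mr))) * dl.
Proof.
move=> hq hq' hdl; rewrite /horizon_value -sumrB mulr_suml.
apply: le_trans (ler_norm_sum _ _ _) (ler_sum _ _) => h _.
rewrite -mulrBr normrM normrX -!mulrA ler_wpM2l ?exprn_ge0 //.
rewrite (_ : _ * (Mr * dl) = #|S|%:R * dl * Mr); last by ring.
exact: norm_iter_stepB_le.
Qed.

End HorizonValue.

Section Acyclic.
Variables (R : realType) (S A : finType) (r : S -> A -> R) (gamma : R)
  (pi : policy R S A) (q : trans R S A) (rho : S -> nat) (T : pred S).
Hypotheses (pi_policy : is_policy pi) (q_trans : is_trans q)
  (T_absorbing : forall s, T s -> forall a, q s a s = 1 /\ r s a = 0)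
  (rho_decr : forall s a s', ~~ T s -> 0 < q s a s' -> (rho s' < rho s)%N).

Lemma terminal_row s a s' : T s -> q s a s' = (s' == s)%:R.
Proof.
move=> Ts; have [qss _] := T_absorbing Ts a; case: eqP => [-> //|/eqP s's].
case: q_trans => q_ge0 /(_ s a) q_sum1.
move: q_sum1; rewrite (bigD1 s) //= qss -[X in _ = X]addr0 => /addrI q_off0.
exact: (psumr_eq0P _ q_off0).
Qed.

Lemma step_terminal f s : T s -> step pi q f s = f s.
Proof.
move=> Ts; have row a : \sum_s' q s a s' * f s' = f s.
  rewrite (bigD1 s) //= terminal_row // eqxx mul1r big1 ?addr0 // => s' s's.
  by rewrite terminal_row // (negbTE s's) mul0r.
rewrite /step; under eq_bigr do rewrite row.
by rewrite -mulr_suml (proj2 pi_policy s) mul1r.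
Qed.

Lemma iter_step_rpi_eq0 h s : T s || (rho s < h)%N ->
  iter h (step pi q) (rpi r pi) s = 0.
Proof.
case: q_trans => q_ge0 _; elim: h s => [|h IH] s /=.
  rewrite ltn0 orbF => Ts; rewrite /rpi big1 // => a _.
  by have [_ ->] := T_absorbing Ts a; rewrite mulr0.
case Ts: (T s) => /= hs; first by rewrite step_terminal // IH // Ts.
rewrite /step big1 // => a _; rewrite big1 ?mulr0 // => s' _.
have [<-|q_neq0] := eqVneq 0 (q s a s'); first by rewrite mul0r.
have q_gt0 : 0 < q s a s' by rewrite lt_neqAle q_neq0 q_ge0.
by rewrite IH ?mulr0 // (leq_trans (rho_decr (negbT Ts) q_gt0) hs) orbT.
Qed.

Lemma value_horizon K : (forall s, rho s < K)%N ->
  value r gamma pi q =1 horizon_value r gamma pi K q.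
Proof.
move=> rhoK s; apply: norm_lim_near_cst; exists K => // n /= Kn.
rewrite (big_cat_nat _ Kn) //= [X in _ + X]big1_seq ?addr0 // => h /andP[_].
rewrite mem_index_iota => /andP[Kh _].
by rewrite iter_step_rpi_eq0 ?mulr0 // (leq_trans (rhoK s) Kh) orbT.
Qed.

Lemma value_bellman s :
  value r gamma pi q s = rpi r pi s + gamma * step pi q (value r gamma pi q) s.
Proof.
pose K := (\max_x rho x).+1.
have rhoK x : (rho x < K)%N by rewrite ltnS; exact: leq_bigmax.
rewrite (value_horizon (fun x => leqW (rhoK x))) (funext (value_horizon rhoK)).
rewrite /horizon_value big_nat_recl //= expr0 mul1r step_sum mulr_sumr.
by congr (_ + _); apply: eq_bigr => h _; rewrite exprS mulrA.
Qed.

Lemma iter_step_eq_below (q' : trans R S A) s0 f h y : ~~ T s0 ->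
  (forall x a y, x != s0 -> q' x a y = q x a y) -> T y || (rho y < rho s0)%N ->
  iter h (step pi q') f y = iter h (step pi q) f y.
Proof.
move=> Ts0 qq'; case: q_trans => q_ge0 _; elim: h y => [//|h IH] y /= hy.
have ys0 : y != s0 by apply: contraTneq hy => ->; rewrite (negbTE Ts0) ltnn.
apply: eq_bigr => a _; congr (_ * _); apply: eq_bigr => s' _; rewrite qq' //.
have [<-|q_neq0] := eqVneq 0 (q y a s'); first by rewrite !mul0r.
have q_gt0 : 0 < q y a s' by rewrite lt_neqAle q_neq0 q_ge0.
rewrite IH //; case Ty: (T y).
  by move: q_gt0; rewrite terminal_row //; case: eqP => [->|]; rewrite ?Ty ?ltxx.
move: hy; rewrite Ty /= => hy.
by rewrite (ltn_trans (rho_decr (negbT Ty) q_gt0) hy) orbT.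
Qed.

End Acyclic.

Section Discretization.
Variables (R : realType) (N : nat).
Hypothesis N_gt0 : (0 < N)%N.

Definition cell_index (v : R) : 'I_N.+1 := inord (Num.truncn (N%:R * v)).

Definition discretize (v : R) : R := (cell_index v)%:R / N%:R.

Definition cell (k : nat) : set R :=
  [set` Interval (BLeft (k%:R / N%:R)) (BLeft (k.+1%:R / N%:R))].

Lemma measurable_cell k : measurable (cell k).
Proof. exact: measurable_itv. Qed.

Lemma cell_indexE v : 0 <= v <= 1 -> (cell_index v : nat) = Num.truncn (N%:R * v).
Proof.
move=> /andP[v_ge0 v_le1]; rewrite /cell_index inordK // ltnS truncn_le_nat.
by apply: (@le_lt_trans _ _ N%:R); rewrite ?ltr_nat // -[X in _ <= X]mulr1 ler_wpM2l.
Qed.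

Lemma cell_indexP v (k : 'I_N.+1) : 0 <= v <= 1 -> cell k v <-> cell_index v = k.
Proof.
move=> v01; have /andP[v_ge0 _] := v01.
rewrite /cell /= in_itv /= ler_pdivrMr ?ltr0n // ltr_pdivlMr ?ltr0n // ![v * _]mulrC.
split=> [hk|<-]; last by rewrite cell_indexE //; exact/truncn_itv/mulr_ge0.
by apply: val_inj; rewrite /= cell_indexE //; apply/eqP; rewrite truncn_eq ?mulr_ge0.
Qed.

Lemma discretize_bounds v : 0 <= v <= 1 ->
  [/\ 0 <= discretize v, discretize v <= v & v - discretize v <= N%:R^-1].
Proof.
move=> v01; have /andP[v_ge0 _] := v01; have N_pos : 0 < N%:R :> R by rewrite ltr0n.
have /andP[lo hi] := truncn_itv (mulr_ge0 (ler0n R N) v_ge0).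
rewrite /discretize cell_indexE //; split; first by rewrite divr_ge0.
  by rewrite ler_pdivrMr // [v * _]mulrC.
have : v < (Num.truncn (N%:R * v)).+1%:R / N%:R by rewrite ltr_pdivlMr // [v * _]mulrC.
by rewrite -natr1 mulrDl mul1r; lra.
Qed.

End Discretization.

Definition trivial_set (T : Type) (K : set T) := K = set0 \/ K = setT.

Lemma trivial_set_cst (T : Type) (Q : Prop) : trivial_set [set _ : T | Q].
Proof.
have [q|nq] := pselect Q; [right|left]; apply/seteqP; split=> // w _ //.
Qed.

Section RowCells.
Variables (R : realType) (d : measure_display) (Om : measurableType d)
  (Pr : probability Om R) (S A : finType) (P : Om -> trans R S A).
Hypotheses (P_meas : forall s a s', measurable_fun setT (fun w => P w s a s'))
  (P_trans : forall w, is_trans (P w)) (P_indep : indep_rows Pr P).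

Local Notation bmeas := (@bounded_measurable R d Om).
Local Notation Ex := (Ex Pr).

Lemma P_01 w x a y : 0 <= P w x a y <= 1.
Proof.
case: (P_trans w) => P_ge0 P_sum1; rewrite P_ge0 -(P_sum1 x a) (bigD1 y) //= lerDl.
exact: sumr_ge0.
Qed.

Definition row_event (B : S -> A -> S -> set R) x : set Om :=
  [set w | forall a y, B x a y (P w x a y)].

Definition cylinder (B : S -> A -> S -> set R) : set Om :=
  \bigcap_(x in [set: S]) row_event B x.

Lemma measurable_cylinder B :
  (forall x a y, measurable (B x a y)) -> measurable (cylinder B).
Proof.
move=> mB; apply: fin_bigcap_measurable => [|x _]; first exact: finite_finset.
have -> : row_event B x = \bigcap_(a in [set: A]) \bigcap_(y in [set: S])
    (setT `&` (fun w => P w x a y) @^-1` B x a y).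
  apply/seteqP; split=> w Bw; first by move=> a _ y _; split=> //; exact: Bw.
  by move=> a y; have [] := Bw a I y I.
apply: fin_bigcap_measurable => [|a _]; first exact: finite_finset.
by apply: fin_bigcap_measurable => [|y _]; [exact: finite_finset | exact: P_meas].
Qed.

Lemma Pr_cylinder B : (forall x a y, measurable (B x a y)) ->
  fine (Pr (cylinder B)) = \prod_x fine (Pr (row_event B x)).
Proof. by move=> mB; rewrite /cylinder (P_indep mB). Qed.

Lemma Pr_setI_trivial (E K : set Om) : trivial_set K ->
  fine (Pr (E `&` K)) = fine (Pr E) * fine (Pr K).
Proof. by case=> ->; rewrite ?setI0 ?setIT ?measure0 ?probability_setT ?mulr0 ?mulr1. Qed.

(* Rows outside [D] are blanked, so that the cells of complementary sets of rows are
   independent discrete random variables. *)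
Definition cells N (D : pred S) w : {ffun S * A * S -> 'I_N.+1} :=
  [ffun t => if D t.1.1 then cell_index N (P w t.1.1 t.1.2 t.2) else ord0].

Definition cells_block N (D : pred S) (c : {ffun S * A * S -> 'I_N.+1}) x a y
    : set R :=
  if D x then cell N (c (x, a, y)) else [set _ | c (x, a, y) = ord0].
Arguments cells_block N D c x a y : clear implicits.

Lemma cylinderI B B' :
  cylinder B `&` cylinder B' = cylinder (fun x a y => B x a y `&` B' x a y).
Proof.
apply/seteqP; split=> w; last by move=> BB'w; split=> x _ a y; have [] := BB'w x I a y.
by move=> [Bw B'w] x _ a y; split; [exact: Bw | exact: B'w].
Qed.

Lemma row_eventI B B' x :
  row_event (fun x a y => B x a y `&` B' x a y) x = row_event B x `&` row_event B' x.
Proof.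
apply/seteqP; split=> w; first by move=> BB'w; split=> a y; have [] := BB'w a y.
by move=> [Bw B'w] a y; split; [exact: Bw | exact: B'w].
Qed.

Section FixedResolution.
Variable N : nat.
Hypothesis N_gt0 : (0 < N)%N.

Lemma measurable_cells_block D c x a y : measurable (cells_block N D c x a y).
Proof.
rewrite /cells_block; case: (D x); first exact: measurable_cell.
by case: (trivial_set_cst R (c (x, a, y) = ord0)) => ->.
Qed.

Lemma cells_preimage D c : cells N D @^-1` [set c] = cylinder (cells_block N D c).
Proof.
apply/seteqP; split=> w.
  move=> /= <- x _ a y; rewrite /cells_block ffunE /=.
  by case: (D x) => //; apply/(cell_indexP N_gt0 _ (P_01 w x a y)).
move=> /= Bw; apply/ffunP => -[[x a] y]; rewrite ffunE /=.
have := Bw x I a y; rewrite /cells_block.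
by case: (D x) => // /(cell_indexP N_gt0 _ (P_01 w x a y)).
Qed.

Lemma measurable_cells_preimage D c : measurable (cells N D @^-1` [set c]).
Proof.
rewrite cells_preimage; apply: measurable_cylinder => *.
exact: measurable_cells_block.
Qed.

Lemma row_event_trivial D c x :
  ~~ D x -> trivial_set (row_event (cells_block N D c) x).
Proof.
move=> /negbTE Dx; rewrite /row_event /cells_block Dx.
exact: (trivial_set_cst Om (forall a y, c (x, a, y) = ord0)).
Qed.

Lemma cells_indep D c c' :
  fine (Pr (cells N D @^-1` [set c] `&` cells N (predC D) @^-1` [set c'])) =
  fine (Pr (cells N D @^-1` [set c])) * fine (Pr (cells N (predC D) @^-1` [set c'])).
Proof.
have mB D' c'' x a y := measurable_cells_block D' c'' x a y.
rewrite !cells_preimage cylinderI !Pr_cylinder // -?big_split /=; last first.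
  by move=> x a y; apply: measurableI.
apply: eq_bigr => x _; rewrite row_eventI; case Dx: (D x).
  by rewrite Pr_setI_trivial //; apply: row_event_trivial; rewrite /= Dx.
by rewrite setIC Pr_setI_trivial 1?mulrC //; apply: row_event_trivial; rewrite Dx.
Qed.

Lemma Ex_mul_cells D (f g : {ffun S * A * S -> 'I_N.+1} -> R) :
  Ex (fun w => f (cells N D w) * g (cells N (predC D) w)) =
  Ex (f \o cells N D) * Ex (g \o cells N (predC D)).
Proof.
by apply: Ex_mul_indep_discrete; [exact: measurable_cells_preimage.. | exact: cells_indep].
Qed.

End FixedResolution.

Definition cell_approx (D : pred S) (Y : Om -> R) (C : R) :=
  forall N, (0 < N)%N -> exists g : {ffun S * A * S -> 'I_N.+1} -> R,
    forall w, `|Y w - g (cells N D w)| <= C / N%:R.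

Lemma cell_approx_le D Y C C' : C <= C' -> cell_approx D Y C -> cell_approx D Y C'.
Proof.
move=> CC' approxY N N_gt0; have [g hg] := approxY N N_gt0; exists g => w.
by apply: le_trans (hg w) _; rewrite ler_pM2r ?invr_gt0 ?ltr0n.
Qed.

Lemma Ex_mul_cell_approx D X Y C : bmeas X -> bmeas Y -> 0 <= C ->
  cell_approx D X C -> cell_approx (predC D) Y C ->
  Ex (fun w => X w * Y w) = Ex X * Ex Y.
Proof.
move=> bX bY C_ge0 approxX approxY.
apply: (Ex_mul_of_uncorrelated_approx (C := C)) => // N N_gt0.
have [f hf] := approxX N N_gt0; have [g hg] := approxY N N_gt0.
exists (f \o cells N D), (g \o cells N (predC D)); split=> //.
- exact/bounded_measurable_comp_discrete/measurable_cells_preimage.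
- exact/bounded_measurable_comp_discrete/measurable_cells_preimage.
- exact: Ex_mul_cells.
Qed.

Lemma cell_approxM D Y Z C MY MZ : 0 <= C ->
  (forall w, `|Y w| <= MY) -> (forall w, `|Z w| <= MZ) ->
  cell_approx D Y C -> cell_approx D Z C ->
  cell_approx D (fun w => Y w * Z w) ((MY + MZ + C) * C).
Proof.
move=> C_ge0 hMY hMZ approxY approxZ N N_gt0.
have [f hf] := approxY N N_gt0; have [g hg] := approxZ N N_gt0.
exists (fun c => f c * g c) => w; rewrite -mulrA.
apply: le_trans (norm_mul_approx (hf w) (hg w) (hMY w) (hMZ w)) _.
have e_ge0 : 0 <= C / N%:R by rewrite divr_ge0.
have eC : C / N%:R <= C by rewrite ler_pdivrMr ?ltr0n // ler_peMr // ler1n.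
by rewrite ler_wpM2r // lerD2l.
Qed.

Lemma cell_approx_row s a y : cell_approx (pred1 s) (fun w => P w s a y) 1.
Proof.
move=> N N_gt0.
exists (fun c : {ffun S * A * S -> 'I_N.+1} => (c (s, a, y) : nat)%:R / N%:R) => w.
rewrite ffunE /= eqxx div1r; have [lo hi err] := discretize_bounds N_gt0 (P_01 w s a y).
by rewrite ger0_norm ?subr_ge0.
Qed.

End RowCells.

Section UncertaintyBellman.
Variables (R : realType) (d : measure_display) (Om : measurableType d)
  (Pr : probability Om R) (S A : finType) (r : S -> A -> R) (gamma : R)
  (pi : policy R S A) (P : Om -> trans R S A) (rho : S -> nat) (T : pred S).
Hypotheses (pi_policy : is_policy pi)
  (P_meas : forall s a s', measurable_fun setT (fun w => P w s a s'))
  (P_trans : forall w, is_trans (P w)) (P_indep : indep_rows Pr P)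
  (T_absorbing : forall s, T s -> forall w a, P w s a s = 1 /\ r s a = 0)
  (rho_decr : forall w s a s', ~~ T s -> 0 < P w s a s' -> (rho s' < rho s)%N).

Local Notation bmeas := (@bounded_measurable R d Om).
Local Notation Ex := (Ex Pr).
Local Notation V w := (value r gamma pi (P w)).

Let T_absorbing_at w s (Ts : T s) a := T_absorbing Ts w a.
Let K := (\max_x rho x).+1.
Let rho_ltK x : (rho x < K)%N. Proof. by rewrite ltnS; exact: leq_bigmax. Qed.
Let Mr := \sum_x `|rpi r pi x|.
Let rpi_le x : `|rpi r pi x| <= Mr.
Proof. by rewrite /Mr (bigD1 x) //= lerDl sumr_ge0. Qed.

Let V_horizon w : V w =1 horizon_value r gamma pi K (P w).
Proof.
exact: (value_horizon gamma pi_policy (P_trans w) (T_absorbing_at w) (@rho_decr w) rho_ltK).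
Qed.

Lemma bounded_measurable_P s a y : bmeas (fun w => P w s a y).
Proof.
split; first exact: P_meas.
by exists 1 => w; have /andP[P_ge0 P_le1] := P_01 P_trans w s a y; rewrite ger0_norm.
Qed.

Lemma bounded_measurable_step F s : (forall y, bmeas (fun w => F w y)) ->
  bmeas (fun w => step pi (P w) (F w) s).
Proof.
move=> bF; apply: bounded_measurable_sum => a; apply: bounded_measurableM => //.
apply: bounded_measurable_sum => y.
by apply: bounded_measurableM; [exact: bounded_measurable_P|].
Qed.

Lemma bounded_measurable_value y : bmeas (fun w => V w y).
Proof.
under eq_fun do rewrite V_horizon.
apply: bounded_measurable_sum => h; apply: bounded_measurableM => //.
elim: h y => [|h IH] y /=; [exact: bounded_measurable_cst | exact: bounded_measurable_step].
Qed.

Lemma Ex_step F s : (forall y, bmeas (fun w => F w y)) ->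
  (forall a y, Ex (fun w => P w s a y * F w y) =
               Ex (fun w => P w s a y) * Ex (fun w => F w y)) ->
  Ex (fun w => step pi (P w) (F w) s) =
  step pi (fun x a y => Ex (fun w => P w x a y)) (fun y => Ex (fun w => F w y)) s.
Proof.
move=> bF uncorr; have bPF a y : bmeas (fun w => P w s a y * F w y).
  by apply: bounded_measurableM; [exact: bounded_measurable_P|].
rewrite Ex_sum => [|a]; last first.
  by apply: bounded_measurableM => //; exact: bounded_measurable_sum.
apply: eq_bigr => a _; rewrite ExZl; last exact: bounded_measurable_sum.
by rewrite Ex_sum //; congr (_ * _); apply: eq_bigr => y _; rewrite uncorr.
Qed.

Lemma cell_approx_value s y : ~~ T s -> (rho y < rho s)%N ->
  exists C, 0 <= C /\ cell_approx P (predC (pred1 s)) (fun w => V w y) C.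
Proof.
move=> Ts rho_ys; pose C := \sum_(0 <= h < K) `|gamma| ^+ h * (h%:R * (#|S|%:R * Mr)).
exists C; split=> [|N N_gt0].
  by apply: sumr_ge0 => h _; rewrite !mulr_ge0 ?exprn_ge0 ?(le_trans _ (rpi_le s)).
pose cell_trans (c : {ffun S * A * S -> 'I_N.+1}) : trans R S A :=
  fun x a y => (c (x, a, y) : nat)%:R / N%:R.
exists (fun c => horizon_value r gamma pi K (cell_trans c) y) => w.
(* From y the chain never reaches s, so V w y does not change when the row of s is zeroed;
   that row is zero in the grid transition as well. *)
pose P0 : trans R S A := fun x a y => if x == s then 0 else P w x a y.
have P0_below x a z : 0 <= P0 x a z <= P w x a z.
  have /andP[P_ge0 _] := P_01 P_trans w x a z.
  by rewrite /P0; case: eqP => _; [rewrite lexx P_ge0 | rewrite P_ge0 lexx].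
have cell_below x a z :
    0 <= cell_trans (cells P N (predC (pred1 s)) w) x a z <= P w x a z.
  have [lo hi _] := discretize_bounds N_gt0 (P_01 P_trans w x a z).
  rewrite /cell_trans ffunE /=; case: eqP => _ /=; last by rewrite lo hi.
  by rewrite mul0r lexx (le_trans lo hi).
have V_P0 : V w y = horizon_value r gamma pi K P0 y.
  rewrite V_horizon /horizon_value; apply: eq_bigr => h _; congr (_ * _).
  apply/esym/(iter_step_eq_below pi (P_trans w) (T_absorbing_at w) (@rho_decr w) _ _ Ts).
    by move=> x a z /negbTE xs; rewrite /P0 xs.
  by rewrite rho_ys orbT.
have Pw_sub := is_trans_substochastic (P_trans w).
rewrite V_P0 -div1r mulrA mulr1.
apply: (norm_horizon_valueB_le gamma K pi_policy rpi_le).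
- exact: substochastic_le Pw_sub P0_below.
- exact: substochastic_le Pw_sub cell_below.
move=> x a z; rewrite /P0 /cell_trans ffunE /=; case: eqP => _ /=.
  by rewrite mul0r subrr normr0 invr_ge0 ler0n.
have [lo hi err] := discretize_bounds N_gt0 (P_01 P_trans w x a z).
by rewrite ger0_norm // subr_ge0.
Qed.

Lemma Ex_row_mul s a y Y : bmeas Y ->
  (~~ T s -> (rho y < rho s)%N -> exists C, 0 <= C /\ cell_approx P (predC (pred1 s)) Y C) ->
  Ex (fun w => P w s a y * Y w) = Ex (fun w => P w s a y) * Ex Y.
Proof.
move=> bY approxY; case Ts: (T s).
  apply: (Ex_mul_cst Pr (c := (y == s)%:R)) => // w.
  exact: (terminal_row (P_trans w) (T_absorbing_at w) _ _ Ts).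
have [rho_ys|rho_sy] := ltnP (rho y) (rho s); last first.
  apply: (Ex_mul_cst Pr (c := 0)) => // w; have /andP[P_ge0 _] := P_01 P_trans w s a y.
  apply/eqP; rewrite eq_le P_ge0 andbT leNgt; apply: contraTN rho_sy => P_gt0.
  by rewrite -ltnNge (rho_decr (negbT Ts) P_gt0).
have [C [C_ge0 approxY']] := approxY (negbT Ts) rho_ys.
apply: (Ex_mul_cell_approx P_meas P_trans P_indep (D := pred1 s) (C := 1 + C)) => //.
- exact: bounded_measurable_P.
- by rewrite addr_ge0.
- by apply: cell_approx_le (cell_approx_row P_trans s a y); rewrite lerDl.
- by apply: cell_approx_le approxY'; rewrite lerDr.
Qed.

Lemma Ex_row_value s a y :
  Ex (fun w => P w s a y * V w y) = Ex (fun w => P w s a y) * Ex (fun w => V w y).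
Proof. by apply: Ex_row_mul; [exact: bounded_measurable_value | exact: cell_approx_value]. Qed.

Lemma Ex_row_value_sqr s a y :
  Ex (fun w => P w s a y * V w y ^+ 2) = Ex (fun w => P w s a y) * Ex (fun w => V w y ^+ 2).
Proof.
pose MV := \sum_(0 <= h < K) `|gamma| ^+ h * Mr.
have V_le w : `|V w y| <= MV.
  rewrite V_horizon; apply: (norm_horizon_value_le gamma K pi_policy rpi_le).
  exact: is_trans_substochastic.
apply: Ex_row_mul => [|Ts rho_ys].
  by apply: bounded_measurableM; exact: bounded_measurable_value.
have [C [C_ge0 approxV]] := cell_approx_value Ts rho_ys.
have MV_ge0 : 0 <= MV.
  by apply: sumr_ge0 => h _; rewrite mulr_ge0 ?exprn_ge0 ?(le_trans _ (rpi_le s)).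
exists ((MV + MV + C) * C); split; first by rewrite !mulr_ge0 ?addr_ge0.
exact: cell_approxM.
Qed.

Lemma uncertainty_bellman :
  let pbar : trans R S A := fun s a s' => Ex (fun w => P w s a s') in
  let Vbar : S -> R := fun s => Ex (fun w => V w s) in
  let U : S -> R := fun s => Var Pr (fun w => V w s) in
  let u : S -> R := fun s =>
    locvar pi pbar Vbar s - Ex (fun w => locvar pi (P w) (V w) s) in
  forall s : S,
    U s = gamma ^+ 2 * u s
          + gamma ^+ 2 * \sum_(a : A) \sum_(s' : S) pi s a * pbar s a s' * U s'.
Proof.
move=> pbar Vbar U u s.
pose W w := step pi (P w) (V w) s.
pose EV2 y := Ex (fun w => V w y ^+ 2).
have bV := bounded_measurable_value.
have bV2 y : bmeas (fun w => V w y ^+ 2) by exact: bounded_measurableM.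
have bW : bmeas W by exact: bounded_measurable_step.
have EW : Ex W = step pi pbar Vbar s by apply: Ex_step => // a y; exact: Ex_row_value.
have EW2 : Ex (fun w => step pi (P w) (fun y => V w y ^+ 2) s) = step pi pbar EV2 s.
  by apply: Ex_step => // a y; exact: Ex_row_value_sqr.
have U_W : U s = gamma ^+ 2 * Var Pr W.
  rewrite /U (_ : (fun w => V w s) = fun w => rpi r pi s + gamma * W w) ?Var_affine //.
  apply/funext => w.
  exact: (value_bellman gamma pi_policy (P_trans w) (T_absorbing_at w) (@rho_decr w)).
have Ex_locvar :
    Ex (fun w => locvar pi (P w) (V w) s) = step pi pbar EV2 s - Ex (fun w => W w ^+ 2).
  rewrite /locvar ExB ?EW2 //; last exact: bounded_measurableM.
  exact: bounded_measurable_step.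
have step_U : \sum_a \sum_s' pi s a * pbar s a s' * U s' =
    step pi pbar EV2 s - step pi pbar (fun y => Vbar y ^+ 2) s.
  rewrite -stepB /step; apply: eq_bigr => a _; rewrite mulr_sumr; apply: eq_bigr => y _.
  by rewrite /U VarE // mulrA.
by rewrite U_W VarE // step_U /u Ex_locvar /locvar EW; ring.
Qed.

End UncertaintyBellman.

Theorem theorem1 (R : realType) (S A : finType) (r : S -> A -> R) (gamma : R)
  (d : measure_display) (Om : measurableType d) (Pr : probability Om R)
  (P : Om -> trans R S A) :
  0 <= gamma < 1 ->
  (forall s a s', measurable_fun setT (fun w => P w s a s')) ->
  (forall w, is_trans (P w)) ->
  indep_rows Pr P ->
  acyclic r P ->
  forall (pi : policy R S A), is_policy pi ->
  let pbar : trans R S A := fun s a s' => Ex Pr (fun w => P w s a s') in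
  let Vbar : S -> R := fun s => Ex Pr (fun w => value r gamma pi (P w) s) in
  let U : S -> R := fun s => Var Pr (fun w => value r gamma pi (P w) s) in
  let u : S -> R := fun s =>
    locvar pi pbar Vbar s - Ex Pr (fun w => locvar pi (P w) (value r gamma pi (P w)) s) in
  forall s : S,
    U s = gamma ^+ 2 * u s
          + gamma ^+ 2 * \sum_(a : A) \sum_(s' : S) pi s a * pbar s a s' * U s'.
Proof.
move=> _ P_meas P_trans P_indep [rho [T [T_absorbing rho_decr]]] pi pi_policy.
exact: (uncertainty_bellman gamma pi_policy P_meas P_trans P_indep T_absorbing rho_decr).
Qed.
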